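(* Let $f\colon X\to Y$ be a perfect map between metrizable spaces, $d$ a compatible metric on $X$, and $(M,\varrho)$ a complete metric space. Let $m,n\ge1$, $y\in Y$, and $g\in\mathcal{K}(m,n,y)$. Then there exist a neighborhood $V_y$ of $y$ in $Y$ and $\delta_y>0$ such that whenever $y'\in V_y$ and $g_1\in C(X,M)$ satisfies $\varrho(g_1(x),g(x))<\delta_y$ for all $x\in f^{-1}(y')$, we have $g_1\in\mathcal{K}(m,n,y')$.
   Context: For $A\subset X$ and $\delta>0$, $B(A,\delta)=\{x\in X:d(x,A)<\delta\}$. For $g\in C(X,M)$, $y\in Y$, $x\in f^{-1}(y)$, $C(x,g|f^{-1}(y))$ is the component of $g^{-1}(g(x))\cap f^{-1}(y)$ containing $x$. $\mathcal{K}(m,n,y)$ is the set of all $g\in C(X,M)$ such that for every subcontinuum $L\subset f^{-1}(y)$ with $\operatorname{diam} g(L)\ge1/n$ there is $x\in L$ with $C(x,g|f^{-1}(y))\subset B(L,1/m)$. *)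

From Stdlib Require Import Reals List.
Open Scope R_scope.
Set Implicit Arguments.

Record Metric (T : Type) : Type := {
  mdist : T -> T -> R;
  dist_nonneg : forall x y, 0 <= mdist x y;
  dist_eq0 : forall x y, mdist x y = 0 <-> x = y;
  dist_sym : forall x y, mdist x y = mdist y x;
  dist_tri : forall x y z, mdist x z <= mdist x y + mdist y z
}.

Section Metric_defs.
Variables (T : Type) (d : Metric T).

Definition ball (x : T) (r : R) : T -> Prop := fun z => mdist d x z < r.

Definition open (U : T -> Prop) : Prop :=
  forall x, U x -> exists r, 0 < r /\ forall z, ball x r z -> U z.

Definition nbhd (V : T -> Prop) (x : T) : Prop :=
  exists U, open U /\ U x /\ forall z, U z -> V z.

Definition compact (K : T -> Prop) : Prop :=
  forall C : (T -> Prop) -> Prop,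
    (forall U, C U -> open U) ->
    (forall x, K x -> exists U, C U /\ U x) ->
    exists l : list (T -> Prop),
      (forall U, In U l -> C U) /\ (forall x, K x -> exists U, In U l /\ U x).

Definition connected (A : T -> Prop) : Prop :=
  forall U V, open U -> open V ->
    (forall x, A x -> U x \/ V x) ->
    (forall x, A x -> U x -> V x -> False) ->
    (forall x, A x -> U x) \/ (forall x, A x -> V x).

Definition continuum (L : T -> Prop) : Prop :=
  (exists x, L x) /\ compact L /\ connected L.

Definition component (S : T -> Prop) (x : T) : T -> Prop :=
  fun z => exists A, connected A /\ (forall w, A w -> S w) /\ A x /\ A z.

(** B(A, delta) = { x : d(x, A) < delta }, where d(x,A) = inf_{a in A} d(x,a) *)
Definition Bset (A : T -> Prop) (delta : R) : T -> Prop :=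
  fun x => exists a, A a /\ mdist d x a < delta.

(** diam A >= r, i.e. sup { d(a,b) : a,b in A } >= r *)
Definition diam_ge (A : T -> Prop) (r : R) : Prop :=
  forall s, s < r -> exists a b, A a /\ A b /\ s < mdist d a b.

Definition cauchy (u : nat -> T) : Prop :=
  forall eps, 0 < eps -> exists N, forall p q, (N <= p)%nat -> (N <= q)%nat ->
    mdist d (u p) (u q) < eps.

Definition complete : Prop :=
  forall u, cauchy u -> exists l, forall eps, 0 < eps -> exists N,
    forall p, (N <= p)%nat -> mdist d (u p) l < eps.

Definition closed (F : T -> Prop) : Prop := open (fun x => ~ F x).

End Metric_defs.

Definition continuous (X Y : Type) (dX : Metric X) (dY : Metric Y) (f : X -> Y) : Prop :=
  forall x eps, 0 < eps -> exists delta, 0 < delta /\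
    forall z, mdist dX x z < delta -> mdist dY (f x) (f z) < eps.

Definition perfect (X Y : Type) (dX : Metric X) (dY : Metric Y) (f : X -> Y) : Prop :=
  continuous dX dY f /\
  (forall F, closed dX F -> closed dY (fun y => exists x, F x /\ f x = y)) /\
  (forall y, compact dX (fun x => f x = y)).

Definition image (X M : Type) (g : X -> M) (L : X -> Prop) : M -> Prop :=
  fun p => exists x, L x /\ g x = p.

(** C(x, g|f^{-1}(y)): component of g^{-1}(g(x)) ∩ f^{-1}(y) containing x *)
Definition Cfib (X Y M : Type) (dX : Metric X) (f : X -> Y) (g : X -> M)
  (y : Y) (x : X) : X -> Prop :=
  component dX (fun z => g z = g x /\ f z = y) x.

Definition inK (X Y M : Type) (dX : Metric X) (dM : Metric M) (f : X -> Y)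
  (m n : nat) (y : Y) (g : X -> M) : Prop :=
  continuous dX dM g /\
  forall L : X -> Prop,
    continuum dX L -> (forall x, L x -> f x = y) ->
    diam_ge dM (image g L) (1 / INR n) ->
    exists x, L x /\
      forall z, Cfib dX f g y x z -> Bset dX L (1 / INR m) z.

(** If neither [B(y, 1/(k+1))] nor the tolerance [1/(k+1)]
    works, we get points [y_k -> y], maps [g_k] uniformly close to [g] on [f^{-1}(y_k)], and
    continua [L_k] in [f^{-1}(y_k)] witnessing [g_k \notin K(m,n,y_k)].  As [f] is perfect, the
    [L_k] approach the compact fibre [f^{-1}(y)], so a Blaschke-type selection theorem yields a
    subsequence whose upper and lower Kuratowski limits agree.  The limit [L] is a continuum in
    [f^{-1}(y)] with [diam g(L) >= 1/n], hence some [x \in L] has [C(x, g|f^{-1}(y)) \subset B(L,1/m)].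
    But the bad components of the [L_k] through points converging to [x] have a connected upper
    limit inside that component, and it contains a point outside [B(L, 1/m)]. *)
From Pilot Require Import Defs.
From Stdlib Require Import Reals Lra Lia List Classical ClassicalEpsilon.
Open Scope R_scope.

Lemma choice_fun {A B : Type} (P : A -> B -> Prop) :
  (forall a, exists b, P a b) -> exists h, forall a, P a (h a).
Proof.
  intros H. exists (fun a => proj1_sig (constructive_indefinite_description _ (H a))).
  intros a. exact (proj2_sig (constructive_indefinite_description _ (H a))).
Qed.

Definition rate (i : nat) : R := / (INR i + 1).

Lemma rate_pos i : 0 < rate i.
Proof. unfold rate. apply Rinv_0_lt_compat. pose proof (pos_INR i). lra. Qed.

Lemma rate_antitone i j : (i <= j)%nat -> rate j <= rate i.
Proof.
  intros H. unfold rate. apply Rinv_le_contravar.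
  - pose proof (pos_INR i). lra.
  - apply le_INR in H. lra.
Qed.

Lemma rate_small eps : 0 < eps -> exists i, rate i < eps.
Proof.
  intros He. destruct (archimed_cor1 eps He) as [N [H1 H2]].
  exists N. unfold rate. eapply Rle_lt_trans; [|exact H1].
  apply Rinv_le_contravar; [apply lt_0_INR; lia | lra].
Qed.

Section Metric_facts.
Context {T : Type} (d : Metric T).

(** Short names for the metric axioms (the record field names clash with [Reals]). *)
Lemma md_refl x : mdist d x x = 0.
Proof. apply (dist_eq0 d). reflexivity. Qed.

Lemma md_ge0 x y : 0 <= mdist d x y.
Proof. apply (dist_nonneg d). Qed.

Lemma md_tri x y z : mdist d x z <= mdist d x y + mdist d y z.
Proof. apply (Defs.dist_tri d). Qed.

Lemma md_sym x y : mdist d x y = mdist d y x.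
Proof. apply (Defs.dist_sym d). Qed.

Lemma md_tri3 w x y z : mdist d w z <= mdist d w x + mdist d x y + mdist d y z.
Proof. pose proof (md_tri w x z). pose proof (md_tri x y z). lra. Qed.

Lemma md_eq_small p q : (forall eps, 0 < eps -> mdist d p q < eps) -> p = q.
Proof.
  intros H. apply (dist_eq0 d). destruct (Rle_lt_or_eq_dec _ _ (md_ge0 p q)) as [h|h]; [|lra].
  specialize (H _ h). lra.
Qed.

Lemma ball_open x r : open d (ball d x r).
Proof.
  intros z Hz. unfold ball in *. exists (r - mdist d x z). split; [lra|].
  intros w Hw. pose proof (md_tri x z w). lra.
Qed.

Lemma Bset_open S r : open d (Bset d S r).
Proof.
  intros x [a [Ha Hxa]]. exists (r - mdist d x a). split; [lra|].
  intros w Hw. unfold ball in Hw. exists a. split; auto.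
  pose proof (md_tri w x a). rewrite (md_sym w x) in H. lra.
Qed.

Lemma open_ext (U V : T -> Prop) : (forall z, U z <-> V z) -> open d U -> open d V.
Proof.
  intros E HU x Hx. apply E in Hx. destruct (HU x Hx) as [r [hr H]].
  exists r. split; auto. intros z Hz. apply E. auto.
Qed.

Lemma connected_ext (A B : T -> Prop) :
  (forall z, A z <-> B z) -> connected d A -> connected d B.
Proof.
  intros E HA U V oU oV cov dis.
  destruct (HA U V oU oV) as [h|h].
  - intros x Hx. apply cov, E, Hx.
  - intros x Hx. apply dis, E, Hx.
  - left. intros x Hx. apply h, E, Hx.
  - right. intros x Hx. apply h, E, Hx.
Qed.

Lemma singleton_connected x : connected d (fun w => w = x).
Proof.
  intros U V _ _ cov _. destruct (cov x eq_refl) as [h|h].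
  - left. intros w ->. exact h.
  - right. intros w ->. exact h.
Qed.

Lemma component_refl (S : T -> Prop) x : S x -> component d S x x.
Proof.
  intros Hx. exists (fun w => w = x). repeat split; auto.
  - apply singleton_connected.
  - intros w ->. exact Hx.
Qed.

(** A component is connected: a union of connected sets through a common point [x]. *)
Lemma component_connected (S : T -> Prop) x : connected d (component d S x).
Proof.
  intros U V oU oV cov dis.
  destruct (classic (exists z, component d S x z)) as [[z [A [cA [sA [Ax Az]]]]]|hn].
  2:{ left. intros w Hw. exfalso. apply hn. eauto. }
  assert (cx : component d S x x) by (exists A; auto).
  (* whichever side contains [x] contains every connected piece through [x] *)
  assert (side : forall (P Q : T -> Prop), open d P -> open d Q ->
     (forall w, component d S x w -> P w \/ Q w) ->
     (forall w, component d S x w -> P w -> Q w -> False) -> P x ->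
     forall w, component d S x w -> P w).
  { intros P Q oP oQ cv ds Px w [B [cB [sB [Bx Bw]]]].
    assert (inB : forall v, B v -> component d S x v) by (intros v Hv; exists B; auto).
    destruct (cB P Q oP oQ) as [h|h].
    - intros v Hv; apply cv; auto.
    - intros v Hv; apply ds; auto.
    - auto.
    - exfalso. apply (ds x cx Px (h x Bx)). }
  destruct (cov x cx) as [h|h].
  - left. apply (side U V); auto.
  - right. apply (side V U); auto.
    + intros w Hw; destruct (cov w Hw); auto.
    + intros w Hw a b; apply (dis w Hw b a).
Qed.

Definition cluster_pt (u : nat -> T) (p : T) : Prop :=
  forall eps, 0 < eps -> forall N, exists k, (N <= k)%nat /\ mdist d (u k) p < eps.

Definition approaches (F : T -> Prop) (u : nat -> T) : Prop :=
  forall eps, 0 < eps -> exists N, forall k, (N <= k)%nat ->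
    exists c, F c /\ mdist d (u k) c < eps.

Lemma cluster_pt_not_open (U : T -> Prop) u p :
  open d U -> (forall i, ~ U (u i)) -> cluster_pt u p -> ~ U p.
Proof.
  intros oU Hu Hp Up. destruct (oU p Up) as [r [hr H]].
  destruct (Hp r hr 0%nat) as [k [_ hk]]. apply (Hu k). apply H. unfold ball. rewrite md_sym; auto.
Qed.

(** Otherwise every point of [F] has a ball eventually avoided, and a finite subcover yields
    a uniform neighbourhood of [F] eventually avoided by [u]. *)
Lemma compact_cluster (F : T -> Prop) u :
  Defs.compact d F -> approaches F u -> exists p, F p /\ cluster_pt u p.
Proof.
  intros cF nF. apply NNPP. intros Hn.
  assert (Hp : forall p, F p -> exists e N, 0 < e /\
            forall k, (N <= k)%nat -> e <= mdist d (u k) p).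
  { intros p Fp. apply NNPP. intros H1. apply Hn. exists p. split; auto.
    intros e he N. apply NNPP. intros H2. apply H1. exists e, N. split; auto.
    intros k hk. destruct (Rle_or_lt e (mdist d (u k) p)) as [h|h]; auto.
    exfalso; apply H2; eauto. }
  set (C := fun U : T -> Prop => exists p e N, F p /\ 0 < e /\
     (forall k, (N <= k)%nat -> e <= mdist d (u k) p) /\ (forall z, U z <-> mdist d p z < e/2)).
  destruct (cF C) as [l [Hl1 Hl2]].
  - intros U [p [e [N [_ [_ [_ E]]]]]]. apply (open_ext (ball d p (e/2))).
    + intros z; unfold ball; rewrite E; tauto.
    + apply ball_open.
  - intros x Fx. destruct (Hp x Fx) as [e [N [he H]]].
    exists (ball d x (e/2)). split; [|unfold ball; rewrite md_refl; lra].
    exists x, e, N. repeat split; auto.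
  - assert (uniform : exists eta N, 0 < eta /\ forall U z k, In U l -> U z ->
                        (N <= k)%nat -> eta <= mdist d (u k) z).
    { clear Hl2. induction l as [|U l IH].
      - exists 1, 0%nat. split; [lra | intros ? ? ? []].
      - destruct IH as [eta [N [he H]]]; [intros V hV; apply Hl1; right; auto|].
        destruct (Hl1 U (or_introl eq_refl)) as [p [e [N' [_ [hpe [Hk E]]]]]].
        exists (Rmin eta (e/2)), (Nat.max N N'). split; [apply Rmin_glb_lt; lra|].
        intros V z k [<-|hin] Vz hk.
        + apply E in Vz. specialize (Hk k ltac:(lia)). pose proof (md_tri (u k) z p).
          rewrite (md_sym z p) in H0. pose proof (Rmin_r eta (e/2)). lra.
        + specialize (H V z k hin Vz ltac:(lia)). pose proof (Rmin_l eta (e/2)). lra. }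
    destruct uniform as [eta [N [he H]]]. destruct (nF eta he) as [N1 H1].
    destruct (H1 (Nat.max N N1) ltac:(lia)) as [c [Fc hc]].
    destruct (Hl2 c Fc) as [V [hV Vc]]. specialize (H V c (Nat.max N N1) hV Vc ltac:(lia)). lra.
Qed.

Lemma closed_sub_compact (F S : T -> Prop) :
  Defs.compact d F -> closed d S -> (forall x, S x -> F x) -> Defs.compact d S.
Proof.
  intros cF clS sub C oC covC.
  set (C' := fun U : T -> Prop => C U \/ (forall z, U z <-> ~ S z)).
  destruct (cF C') as [l [Hl1 Hl2]].
  - intros U [h|h]; [auto|]. apply (open_ext (fun z => ~ S z)); [firstorder | apply clS].
  - intros x Fx. destruct (classic (S x)) as [h|h].
    + destruct (covC x h) as [U [? ?]]. exists U; split; auto. left; auto.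
    + exists (fun z => ~ S z). split; auto. right; tauto.
  - assert (K : exists l2, (forall U, In U l2 -> C U) /\
      forall x, S x -> (exists U, In U l /\ U x) -> exists U, In U l2 /\ U x).
    { clear Hl2. induction l as [|U l IH].
      - exists nil. split; [intros ? [] | intros x _ [U [[] _]]].
      - destruct IH as [l2 [A B]]; [intros V hV; apply Hl1; right; auto|].
        destruct (Hl1 U (or_introl eq_refl)) as [h|h].
        + exists (U :: l2). split; [intros V [<-|hv]; auto|].
          intros x Sx [V [[<-|hv] Vx]]; [exists U; split; auto; left; auto|].
          destruct (B x Sx) as [W [? ?]]; [eauto|]. exists W; split; auto; right; auto.
        + exists l2. split; auto. intros x Sx [V [[<-|hv] Vx]].
          * apply h in Vx; contradiction.
          * apply B; eauto. }
    destruct K as [l2 [A B]]. exists l2. split; auto.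
Qed.

Lemma compact_net (F : T -> Prop) e :
  Defs.compact d F -> 0 < e ->
  exists l, (forall p, In p l -> F p) /\ forall c, F c -> exists p, In p l /\ mdist d c p < e.
Proof.
  intros cF he.
  destruct (cF (fun U => exists p, F p /\ forall z, U z <-> mdist d p z < e)) as [l [H1 H2]].
  - intros U [p [_ E]]. apply (open_ext (ball d p e)).
    + intros z; unfold ball; rewrite E; tauto.
    + apply ball_open.
  - intros x Fx. exists (ball d x e). split.
    + exists x. split; auto. unfold ball; tauto.
    + unfold ball; rewrite md_refl; auto.
  - assert (K : exists lp, (forall p, In p lp -> F p) /\
       forall z, (exists U, In U l /\ U z) -> exists p, In p lp /\ mdist d z p < e).
    { clear H2. induction l as [|U l IH].
      - exists nil. split; [intros ? [] | intros z [U [[] _]]].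
      - destruct IH as [lp [A B]]; [intros V hV; apply H1; right; auto|].
        destruct (H1 U (or_introl eq_refl)) as [p [Fp E]].
        exists (p :: lp). split; [intros q [<-|hq]; auto|].
        intros z [V [[<-|hV] Vz]].
        + exists p. split; [left; auto|]. apply E in Vz. rewrite md_sym; auto.
        + destruct (B z) as [q [? ?]]; [eauto|]. exists q. split; auto. right; auto. }
    destruct K as [lp [A B]]. exists lp. split; auto.
Qed.

End Metric_facts.
Section Kuratowski_limits.
Context {T : Type} (d : Metric T).

Definition Ls (C : nat -> T -> Prop) (x : T) : Prop :=
  forall eps, 0 < eps -> forall N, exists j, (N <= j)%nat /\ exists a, C j a /\ mdist d x a < eps.

Definition Li (C : nat -> T -> Prop) (x : T) : Prop :=
  forall eps, 0 < eps -> exists N, forall j, (N <= j)%nat -> exists a, C j a /\ mdist d x a < eps.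

Definition sets_approach (F : T -> Prop) (C : nat -> T -> Prop) : Prop :=
  forall eps, 0 < eps -> exists N, forall j, (N <= j)%nat -> forall w, C j w ->
    exists c, F c /\ mdist d w c < eps.

Lemma Li_Ls C x : Li C x -> Ls C x.
Proof.
  intros H e he N. destruct (H e he) as [N' H']. exists (Nat.max N N'). split; [lia|].
  apply H'. lia.
Qed.

Lemma cluster_not_Bset_Li C (sg : nat -> nat) u p r :
  (forall i, (i <= sg i)%nat) -> (forall i, ~ Bset d (C (sg i)) r (u i)) ->
  cluster_pt d u p -> ~ Bset d (Li C) r p.
Proof.
  intros hsg Hu Hp [a [La hpa]].
  set (ep := (r - mdist d p a) / 2).
  destruct (La ep ltac:(unfold ep; lra)) as [N1 HN1].
  destruct (Hp ep ltac:(unfold ep; lra) N1) as [i [hi hui]].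
  destruct (HN1 (sg i)) as [a' [Ca' ha']]; [specialize (hsg i); lia|].
  apply (Hu i). exists a'. split; auto.
  pose proof (md_tri3 d (u i) p a a'). unfold ep in *. lra.
Qed.

Lemma Li_seq C x : Li C x ->
  exists (sg : nat -> nat) (xi : nat -> T), (forall i, (i <= sg i)%nat) /\
    (forall i, C (sg i) (xi i)) /\ (forall i, mdist d x (xi i) < rate i).
Proof.
  intros Lx.
  assert (H : forall i, exists jx : nat * T, (i <= fst jx)%nat /\ C (fst jx) (snd jx) /\
                 mdist d x (snd jx) < rate i).
  { intros i. destruct (Lx (rate i) (rate_pos i)) as [N HN].
    destruct (HN (Nat.max N i) ltac:(lia)) as [a [La ha]].
    exists (Nat.max N i, a). simpl. split; [lia | auto]. }
  apply choice_fun in H. destruct H as [jx Hjx].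
  exists (fun i => fst (jx i)), (fun i => snd (jx i)). split; [|split]; intros i; apply Hjx.
Qed.

Lemma Ls_closure C p :
  (forall eps, 0 < eps -> exists q, Ls C q /\ mdist d p q < eps) -> Ls C p.
Proof.
  intros H e he N. destruct (H (e/2)) as [q [Lq hq]]; [lra|].
  destruct (Lq (e/2) ltac:(lra) N) as [j [hj [a [Ca ha]]]]. exists j; split; auto.
  exists a; split; auto. pose proof (md_tri d p q a). lra.
Qed.

Lemma Ls_closed C : closed d (Ls C).
Proof.
  intros x nx. apply NNPP. intros h1. apply nx. apply Ls_closure.
  intros e he. apply NNPP; intros h2. apply h1. exists e. split; auto.
  intros z bz Lz. apply h2. exists z. split; auto.
Qed.

Lemma Ls_of_cluster C u p : (forall i, Ls C (u i)) -> cluster_pt d u p -> Ls C p.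
Proof.
  intros Hu Hp. apply Ls_closure. intros e he. destruct (Hp e he 0%nat) as [k [_ hk]].
  exists (u k). split; auto. rewrite md_sym; auto.
Qed.

Lemma Ls_of_cluster_sub C (sg : nat -> nat) u p :
  (forall k, (k <= sg k)%nat) -> (forall k, C (sg k) (u k)) -> cluster_pt d u p -> Ls C p.
Proof.
  intros hsg Cu Hp e he N. destruct (Hp e he N) as [k [hk h]]. exists (sg k).
  split; [specialize (hsg k); lia|]. exists (u k). split; auto. rewrite md_sym; auto.
Qed.

Lemma approaches_of_Ls F C u :
  sets_approach F C -> (forall i, Ls C (u i)) -> approaches d F u.
Proof.
  intros nC Hu e he. exists 0%nat. intros k _.
  destruct (nC (e/2) ltac:(lra)) as [N HN].
  destruct (Hu k (e/2) ltac:(lra) N) as [j [hj [a [Ca ha]]]].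
  destruct (HN j hj a Ca) as [c [Fc hc]]. exists c; split; auto.
  pose proof (md_tri d (u k) a c). lra.
Qed.

Lemma approaches_sub F C (sg : nat -> nat) u :
  sets_approach F C -> (forall k, (k <= sg k)%nat) -> (forall k, C (sg k) (u k)) ->
  approaches d F u.
Proof.
  intros nC hsg Cu e he. destruct (nC e he) as [N HN]. exists N. intros k hk.
  apply (HN (sg k)); auto. specialize (hsg k). lia.
Qed.

Section Compact_target.
Variables (F : T -> Prop) (C : nat -> T -> Prop).
Hypotheses (cF : Defs.compact d F) (nC : sets_approach F C).

Lemma cluster_sub (sg : nat -> nat) u :
  (forall k, (k <= sg k)%nat) -> (forall k, C (sg k) (u k)) ->
  exists p, cluster_pt d u p /\ Ls C p.
Proof.
  intros hsg Cu. destruct (compact_cluster d F u cF) as [p [_ Hp]].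
  - apply (approaches_sub F C sg); auto.
  - exists p. split; auto. apply (Ls_of_cluster_sub C sg u); auto.
Qed.

Lemma joint_cluster (sg : nat -> nat) a b :
  (forall k, (k <= sg k)%nat) -> (forall k, C (sg k) (a k)) -> (forall k, C (sg k) (b k)) ->
  exists pa pb, Ls C pa /\ Ls C pb /\
    forall eps, 0 < eps -> forall N, exists k, (N <= k)%nat /\
      mdist d (a k) pa < eps /\ mdist d (b k) pb < eps.
Proof.
  intros hsg Ca Cb. destruct (cluster_sub sg a hsg Ca) as [pa [Hpa Lpa]].
  assert (Hka : forall i, exists k, (i <= k)%nat /\ mdist d (a k) pa < rate i)
    by (intros i; apply (Hpa (rate i) (rate_pos i) i)).
  apply choice_fun in Hka. destruct Hka as [ka Hka].
  destruct (cluster_sub (fun i => sg (ka i)) (fun i => b (ka i))) as [pb [Hpb Lpb]].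
  { intros i. pose proof (proj1 (Hka i)). specialize (hsg (ka i)). lia. }
  { intros i. apply Cb. }
  exists pa, pb. split; [|split]; auto.
  intros e he N. destruct (rate_small e he) as [i0 hi0].
  destruct (Hpb e he (Nat.max N i0)) as [i [hi hbi]]. destruct (Hka i) as [hki hai].
  exists (ka i). split; [lia|]. split; auto.
  pose proof (rate_antitone i0 i ltac:(lia)). lra.
Qed.

Lemma Ls_eventually_near r : 0 < r ->
  exists N, forall j, (N <= j)%nat -> forall w, C j w -> Bset d (Ls C) r w.
Proof.
  intros hr. apply NNPP. intros Hn.
  assert (Hs : forall i, exists jw : nat * T, (i <= fst jw)%nat /\ C (fst jw) (snd jw) /\
                  ~ Bset d (Ls C) r (snd jw)).
  { intros i. apply NNPP. intros H1. apply Hn. exists i. intros j hj w Cw.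
    apply NNPP. intros H2. apply H1. exists (j, w). simpl. tauto. }
  apply choice_fun in Hs. destruct Hs as [h Hh].
  destruct (cluster_sub (fun i => fst (h i)) (fun i => snd (h i))) as [p [Hp Lp]];
    try (intros i; apply Hh).
  destruct (Hp r hr 0%nat) as [k [_ hk]]. destruct (Hh k) as [_ [_ nB]].
  apply nB. exists p. split; auto.
Qed.

Lemma Ls_gap (U W : T -> Prop) :
  open d U -> open d W ->
  (forall x, Ls C x -> U x \/ W x) -> (forall x, Ls C x -> U x -> W x -> False) ->
  exists r, 0 < r /\ forall a b, Ls C a -> ~ U a -> Ls C b -> ~ W b -> r <= mdist d a b.
Proof.
  intros oU oW cov dis. apply NNPP. intros Hn.
  assert (Hs : forall i, exists ab : T * T, (Ls C (fst ab) /\ ~ U (fst ab)) /\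
                 (Ls C (snd ab) /\ ~ W (snd ab)) /\ mdist d (fst ab) (snd ab) < rate i).
  { intros i. apply NNPP. intros H1. apply Hn. exists (rate i). split; [apply rate_pos|].
    intros a b La nUa Lb nWb. destruct (Rle_or_lt (rate i) (mdist d a b)) as [h|h]; auto.
    exfalso. apply H1. exists (a, b). auto. }
  apply choice_fun in Hs. destruct Hs as [h Hh].
  set (a := fun i => fst (h i)). set (b := fun i => snd (h i)).
  destruct (compact_cluster d F a cF) as [p [_ Hp]].
  { apply (approaches_of_Ls F C); auto. intros i; apply (Hh i). }
  assert (Lp : Ls C p) by (apply (Ls_of_cluster C a); auto; intros i; apply (Hh i)).
  assert (nUp : ~ U p) by (apply (cluster_pt_not_open d U a); auto; intros i; apply (Hh i)).
  assert (nWp : ~ W p).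
  { apply (cluster_pt_not_open d W b); auto; [intros i; apply (Hh i)|].
    intros e he N. destruct (rate_small (e/2)) as [i0 hi0]; [lra|].
    destruct (Hp (e/2) ltac:(lra) (Nat.max N i0)) as [k [hk hak]].
    exists k. split; [lia|]. destruct (Hh k) as [_ [_ hab]].
    pose proof (rate_antitone i0 k ltac:(lia)). pose proof (md_tri d (b k) (a k) p).
    rewrite (md_sym d (b k) (a k)) in H0. unfold a, b in *. lra. }
  destruct (cov p Lp); auto.
Qed.

(** Core of [Ls_connected]: a splitting [U], [W] of [Ls C] with a point [x0] of [Li C] outside [U]
    and a point [b] of [Ls C] outside [W] is impossible, because the connected sets [C j]
    eventually lie in the union of the disjoint neighbourhoods of the two pieces and meet both. *)
Lemma Ls_connected_aux x0 b (U W : T -> Prop) :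
  (forall j, connected d (C j)) -> Li C x0 -> open d U -> open d W ->
  (forall x, Ls C x -> U x \/ W x) -> (forall x, Ls C x -> U x -> W x -> False) ->
  ~ U x0 -> Ls C b -> ~ W b -> False.
Proof.
  intros cC Lx0 oU oW cov dis nUx0 Lb nWb.
  destruct (Ls_gap U W oU oW cov dis) as [r [hr Hgap]].
  set (U' := Bset d (fun z => Ls C z /\ ~ W z) (r/3)).
  set (W' := Bset d (fun z => Ls C z /\ ~ U z) (r/3)).
  assert (disj : forall w, U' w -> W' w -> False).
  { intros w [b' [[Lb' nWb'] hb]] [a [[La nUa] ha]]. specialize (Hgap a b' La nUa Lb' nWb').
    pose proof (md_tri d a w b'). rewrite (md_sym d a w) in H. lra. }
  destruct (Ls_eventually_near (r/3) ltac:(lra)) as [N HN].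
  destruct (Lx0 (r/3) ltac:(lra)) as [N1 H1].
  destruct (Lb (r/3) ltac:(lra) (Nat.max N N1)) as [j [hj [c [Cc hc]]]].
  destruct (H1 j ltac:(lia)) as [w [Cw hw]].
  assert (Lx0s : Ls C x0) by (apply Li_Ls; auto).
  destruct (cC j U' W' (Bset_open d _ _) (Bset_open d _ _)) as [h|h].
  - intros z Cz. destruct (HN j ltac:(lia) z Cz) as [p [Lp hp]].
    destruct (classic (W p)) as [Wp|nWp].
    + right. exists p. repeat split; auto. intros Up. apply (dis p); auto.
    + left. exists p. repeat split; auto.
  - intros z _ a a'. apply (disj z a a').
  - apply (disj w); [apply h; auto|]. exists x0. repeat split; auto. rewrite md_sym; auto.
  - apply (disj c); [|apply h; auto]. exists b. repeat split; auto. rewrite md_sym; auto.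
Qed.

Lemma Ls_connected x0 :
  (forall j, connected d (C j)) -> Li C x0 -> connected d (Ls C).
Proof.
  intros cC Lx0 U W oU oW cov dis.
  destruct (classic (forall p, Ls C p -> U p)) as [h|h]; [left; auto|].
  destruct (classic (forall p, Ls C p -> W p)) as [h'|h']; [right; auto|].
  exfalso.
  assert (Lx0s : Ls C x0) by (apply Li_Ls; auto).
  destruct (classic (U x0)) as [Ux|nUx].
  - apply h. intros p Lp. apply NNPP. intros nUp.
    destruct (classic (W x0)) as [Wx|nWx]; [apply (dis x0); auto|].
    apply (Ls_connected_aux x0 p W U); auto.
    + intros x Lx; destruct (cov x Lx); auto.
    + intros x Lx a b; apply (dis x); auto.
  - apply h'. intros p Lp. apply NNPP. intros nWp.
    apply (Ls_connected_aux x0 p U W); auto.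
Qed.

End Compact_target.
End Kuratowski_limits.
Definition infinite (I : nat -> Prop) : Prop := forall N, exists k, (N <= k)%nat /\ I k.

Lemma refine_homogeneous {T} (P : T -> nat -> Prop) (l : list T) (I : nat -> Prop) :
  infinite I -> exists I', infinite I' /\ (forall k, I' k -> I k) /\
    forall p, In p l -> (forall k, I' k -> P p k) \/ (forall k, I' k -> ~ P p k).
Proof.
  revert I. induction l as [|p l IH]; intros I HI.
  - exists I. split; [auto|split; [auto|intros ? []]].
  - destruct (IH I HI) as [I1 [inf1 [sub1 hom1]]].
    destruct (classic (infinite (fun k => I1 k /\ P p k))) as [h|h].
    + exists (fun k => I1 k /\ P p k). split; auto. split; [intros k [? ?]; auto|].
      intros q [<-|hq]; [left; intros k [? ?]; auto|].
      destruct (hom1 q hq) as [h'|h']; [left|right]; intros k [? ?]; auto.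
    + assert (Hn : exists N, forall k, (N <= k)%nat -> I1 k -> ~ P p k).
      { apply NNPP. intros H1. apply h. intros N. apply NNPP. intros H2. apply H1.
        exists N. intros k hk Ik nk. apply H2. eauto. }
      destruct Hn as [N HN].
      exists (fun k => I1 k /\ (N <= k)%nat). split.
      { intros M. destruct (inf1 (Nat.max M N)) as [k [hk Ik]].
        exists k. split; [lia | split; auto; lia]. }
      split; [intros k [? ?]; auto|].
      intros q [<-|hq]; [right; intros k [? ?]; auto|].
      destruct (hom1 q hq) as [h'|h']; [left|right]; intros k [? ?]; auto.
Qed.

Fixpoint iter_refine (stp : nat * (nat -> Prop) -> nat -> Prop) (i : nat) : nat -> Prop :=
  match i with
  | O => fun _ => True
  | S i' => stp (i', iter_refine stp i')
  end.

Lemma nested_homogeneous {T} (P : nat -> T -> nat -> Prop) (ls : nat -> list T) :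
  exists sI : nat -> nat -> Prop, (forall i, infinite (sI i)) /\
    (forall i i', (i <= i')%nat -> forall k, sI i' k -> sI i k) /\
    (forall i p, In p (ls i) ->
       (forall k, sI (S i) k -> P i p k) \/ (forall k, sI (S i) k -> ~ P i p k)).
Proof.
  assert (Hs : forall iI : nat * (nat -> Prop), exists I',
     infinite (snd iI) -> infinite I' /\ (forall k, I' k -> snd iI k) /\
     forall p, In p (ls (fst iI)) -> (forall k, I' k -> P (fst iI) p k) \/
                                    (forall k, I' k -> ~ P (fst iI) p k)).
  { intros [i I]. destruct (classic (infinite I)) as [h|h].
    - destruct (refine_homogeneous (P i) (ls i) I h) as [I' ?]. exists I'. auto.
    - exists I. intros; contradiction. }
  apply choice_fun in Hs. destruct Hs as [stp Hstp].
  set (sI := iter_refine stp).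
  assert (inf : forall i, infinite (sI i)).
  { intros i; induction i as [|i IH].
    - intros N; exists N; split; [lia | unfold sI; simpl; auto].
    - unfold sI; simpl. apply (Hstp (i, sI i)); auto. }
  exists sI. split; [exact inf|split].
  - intros i i' h. induction h; auto.
    intros k hk. apply IHh. apply (Hstp (m, sI m) (inf m)); auto.
  - intros i p hp. apply (Hstp (i, sI i) (inf i)); auto.
Qed.

(** At scale [rate i] a finite net of [F]
    is used, and the [i]-th refinement decides, for each net point, whether it is near the
    sets of the subsequence; a diagonal choice then works at every scale. *)
Lemma kuratowski_selection {T} (d : Metric T) (F : T -> Prop) (A : nat -> T -> Prop) :
  Defs.compact d F -> sets_approach d F A ->
  exists phi : nat -> nat, (forall j, (j <= phi j)%nat) /\
    forall x, Ls d (fun j => A (phi j)) x -> Li d (fun j => A (phi j)) x.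
Proof.
  intros cF nA.
  assert (Hn : forall i, exists l, (forall p, In p l -> F p) /\
      forall c, F c -> exists p, In p l /\ mdist d c p < rate i)
    by (intros i; apply compact_net; auto; apply rate_pos).
  apply choice_fun in Hn. destruct Hn as [nets Hnets].
  set (near := fun i p k => exists a, A k a /\ mdist d a p < 2 * rate i).
  destruct (nested_homogeneous near nets) as [sI [inf [mono hom]]].
  assert (Hphi : forall j, exists k, (j <= k)%nat /\ sI (S j) k) by (intros j; apply inf).
  apply choice_fun in Hphi. destruct Hphi as [phi Hphi].
  exists phi. split; [intros j; apply Hphi|].
  intros x Lx e he.
  destruct (rate_small (e/5)) as [i hi]; [lra|].
  pose proof (rate_pos i) as hpos.
  destruct (nA (rate i) hpos) as [N0 HN0].
  destruct (Lx (rate i) hpos (Nat.max i N0)) as [j0 [hj0 [a [Aa ha]]]].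
  destruct (Hphi j0) as [hp0 sp0].
  destruct (HN0 (phi j0) ltac:(lia) a Aa) as [c [Fc hc]].
  destruct (proj2 (Hnets i) c Fc) as [p [inp hcp]].
  assert (hap : mdist d a p < 2 * rate i) by (pose proof (md_tri d a c p); lra).
  destruct (hom i p inp) as [hall|hnone].
  2:{ exfalso. apply (hnone (phi j0)); [apply (mono (S i) (S j0)); auto; lia|].
      exists a; split; auto. }
  exists i. intros j hj. destruct (Hphi j) as [_ spj].
  destruct (hall (phi j)) as [a' [Aa' ha']]; [apply (mono (S i) (S j)); auto; lia|].
  exists a'. split; auto.
  pose proof (md_tri d x a a'). pose proof (md_tri d a p a'). rewrite (md_sym d p a') in H0. lra.
Qed.
Section Perfect_maps.
Context {X Y : Type} (dX : Metric X) (dY : Metric Y) (f : X -> Y).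

Lemma fiber_nbhd y eps :
  perfect dX dY f -> 0 < eps -> exists r, 0 < r /\ forall y', mdist dY y y' < r ->
    forall x, f x = y' -> exists c, f c = y /\ mdist dX x c < eps.
Proof.
  intros [_ [fcl _]] he.
  set (U := Bset dX (fun c => f c = y) eps).
  assert (cl : closed dX (fun x => ~ U x)).
  { apply (open_ext dX U); [intros z; split; intros; [tauto | apply NNPP; auto] | apply Bset_open]. }
  destruct (fcl _ cl y) as [r [hr H]].
  - intros [x [nU fx]]. apply nU. exists x. split; auto. rewrite md_refl; auto.
  - exists r. split; auto. intros y' hy x fx.
    destruct (classic (U x)) as [[c [? ?]]|h]; [eauto|].
    exfalso. apply (H y' hy). exists x; auto.
Qed.

Lemma fibers_approach y (C : nat -> X -> Prop) :
  perfect dX dY f -> (forall j w, C j w -> mdist dY y (f w) < rate j) ->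
  sets_approach dX (fun x => f x = y) C.
Proof.
  intros pf hC eps he. destruct (fiber_nbhd y eps pf he) as [r [hr H]].
  destruct (rate_small r hr) as [N hN]. exists N. intros j hj w Cw.
  apply (H (f w)); auto. pose proof (hC j w Cw). pose proof (rate_antitone N j hj). lra.
Qed.

Lemma Ls_in_fiber y (C : nat -> X -> Prop) x :
  continuous dX dY f -> (forall j w, C j w -> mdist dY y (f w) < rate j) ->
  Ls dX C x -> f x = y.
Proof.
  intros cf hC Lx. apply (md_eq_small dY). intros eps he.
  destruct (cf x (eps/2)) as [del [hd Hd]]; [lra|].
  destruct (rate_small (eps/2)) as [N hN]; [lra|].
  destruct (Lx del hd N) as [j [hj [a [Ca hxa]]]].
  specialize (Hd a hxa). pose proof (hC j a Ca). pose proof (rate_antitone N j hj).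
  rewrite (md_sym dY y) in H. pose proof (md_tri dY (f x) (f a) y). lra.
Qed.

End Perfect_maps.

Definition bad_continuum {X Y M : Type} (dX : Metric X) (dM : Metric M) (f : X -> Y)
  (m n : nat) (y' : Y) (g1 : X -> M) (L : X -> Prop) : Prop :=
  continuum dX L /\ (forall x, L x -> f x = y') /\ diam_ge dM (image g1 L) (1 / INR n) /\
  forall x, L x -> exists z, Cfib dX f g1 y' x z /\ ~ Bset dX L (1 / INR m) z.

Lemma not_inK_bad_continuum {X Y M : Type} (dX : Metric X) (dM : Metric M) (f : X -> Y)
  m n y' (g1 : X -> M) :
  continuous dX dM g1 -> ~ inK dX dM f m n y' g1 ->
  exists L, bad_continuum dX dM f m n y' g1 L.
Proof.
  intros cg1 nK. apply NNPP. intros nL. apply nK. split; auto.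
  intros L cL Lf dL. apply NNPP. intros nx. apply nL. exists L.
  split; [|split; [|split]]; auto.
  intros x Lx. apply NNPP. intros nz. apply nx. exists x. split; auto.
  intros z Cz. apply NNPP. intros nB. apply nz. eauto.
Qed.
Section Limit_of_bad_continua.
Context {X Y M : Type} (dX : Metric X) (dY : Metric Y) (dM : Metric M) (f : X -> Y).
Variables (m n : nat) (y : Y) (g : X -> M).
Hypotheses (pf : perfect dX dY f) (cg : continuous dX dM g).

Variables (yj : nat -> Y) (gj : nat -> X -> M) (Lj : nat -> X -> Prop).
Hypotheses
  (yj_rate : forall j, mdist dY y (yj j) < rate j)
  (gj_rate : forall j x, f x = yj j -> mdist dM (gj j x) (g x) < rate j)
  (Lj_bad : forall j, bad_continuum dX dM f m n (yj j) (gj j) (Lj j))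
  (Lj_conv : forall x, Ls dX Lj x -> Li dX Lj x).

Lemma fiber_compact : Defs.compact dX (fun x => f x = y).
Proof. apply pf. Qed.

Lemma subfiber_rate (sg : nat -> nat) (C : nat -> X -> Prop) :
  (forall j, (j <= sg j)%nat) -> (forall j w, C j w -> f w = yj (sg j)) ->
  forall j w, C j w -> mdist dY y (f w) < rate j.
Proof.
  intros hsg hC j w Cw. rewrite (hC j w Cw).
  pose proof (yj_rate (sg j)). pose proof (rate_antitone _ _ (hsg j)). lra.
Qed.

Lemma Lj_approach : sets_approach dX (fun x => f x = y) Lj.
Proof.
  apply (fibers_approach dX dY f y Lj pf).
  apply (subfiber_rate (fun j => j)); [auto | intros j w Lw; apply (Lj_bad j); auto].
Qed.

Lemma Li_in_fiber x : Li dX Lj x -> f x = y.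
Proof.
  intros Lx. apply (Ls_in_fiber dX dY f y Lj); [apply pf | | apply Li_Ls; auto].
  apply (subfiber_rate (fun j => j)); [auto | intros j w Lw; apply (Lj_bad j); auto].
Qed.

Lemma Li_continuum : continuum dX (Li dX Lj).
Proof.
  assert (Ha : forall j, exists a, Lj j a) by (intros j; apply (Lj_bad j)).
  apply choice_fun in Ha. destruct Ha as [aj Haj].
  destruct (cluster_sub dX _ Lj fiber_compact Lj_approach (fun j => j) aj) as [p0 [_ Lp0]];
    auto.
  assert (Lim_Ls : forall z, Ls dX Lj z <-> Li dX Lj z) by (split; [apply Lj_conv | apply Li_Ls]).
  split; [exists p0; auto | split].
  - apply (closed_sub_compact dX (fun x => f x = y)); [exact fiber_compact | | exact Li_in_fiber].
    apply (open_ext dX (fun z => ~ Ls dX Lj z)); [firstorder | apply Ls_closed].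
  - apply (connected_ext dX (Ls dX Lj)); [exact Lim_Ls|].
    apply (Ls_connected dX _ Lj fiber_compact Lj_approach p0); auto.
    intros j; apply (Lj_bad j).
Qed.

(** Lower semicontinuity of the diameter: [diam g(Li Lj) >= 1/n], since pairs far apart under
    [gj j] in [Lj j] have cluster points in [Li Lj] that stay far apart under [g]. *)
Lemma Li_diam : diam_ge dM (image g (Li dX Lj)) (1 / INR n).
Proof.
  intros s hs. set (s' := (s + 1 / INR n) / 2).
  assert (Hab : forall j, exists ab : X * X, Lj j (fst ab) /\ Lj j (snd ab) /\
                  s' < mdist dM (gj j (fst ab)) (gj j (snd ab))).
  { intros j. destruct (proj1 (proj2 (proj2 (Lj_bad j))) s') as [p [q [[a [La <-]] [[b [Lb <-]] hpq]]]].
    - unfold s'; lra.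
    - exists (a, b). auto. }
  apply choice_fun in Hab. destruct Hab as [ab Hab].
  set (a := fun j => fst (ab j)). set (b := fun j => snd (ab j)).
  destruct (joint_cluster dX _ Lj fiber_compact Lj_approach (fun j => j) a b)
    as [pa [pb [Lpa [Lpb Hk]]]]; try (intros j; apply Hab); auto.
  exists (g pa), (g pb). split; [exists pa; auto | split; [exists pb; auto |]].
  set (eta := (s' - s) / 5).
  assert (heta : 0 < eta) by (unfold eta, s'; lra).
  destruct (cg pa eta heta) as [d1 [hd1 Hd1]].
  destruct (cg pb eta heta) as [d2 [hd2 Hd2]].
  destruct (rate_small eta heta) as [i0 hi0].
  destruct (Hk (Rmin d1 d2) ltac:(apply Rmin_glb_lt; auto) i0) as [k [hk [hak hbk]]].
  pose proof (Rmin_l d1 d2). pose proof (Rmin_r d1 d2). pose proof (rate_antitone _ _ hk).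
  destruct (Hab k) as [La [Lb hab]]. fold (a k) (b k) in La, Lb, hab.
  assert (e1 : mdist dM (g pa) (g (a k)) < eta) by (apply Hd1; rewrite md_sym; lra).
  assert (e2 : mdist dM (g pb) (g (b k)) < eta) by (apply Hd2; rewrite md_sym; lra).
  assert (e3 : mdist dM (gj k (a k)) (g (a k)) < rate k) by (apply gj_rate, (Lj_bad k); auto).
  assert (e4 : mdist dM (gj k (b k)) (g (b k)) < rate k) by (apply gj_rate, (Lj_bad k); auto).
  pose proof (md_tri3 dM (gj k (a k)) (g (a k)) (g (b k)) (gj k (b k))).
  pose proof (md_tri3 dM (g (a k)) (g pa) (g pb) (g (b k))).
  rewrite (md_sym dM (g (a k)) (g pa)) in H3. rewrite (md_sym dM (g (b k)) (gj k (b k))) in H2.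
  unfold eta in *. lra.
Qed.

Lemma Ls_level_set x (sg : nat -> nat) (xi : nat -> X) (C : nat -> X -> Prop) :
  (forall i, (i <= sg i)%nat) -> (forall i, mdist dX x (xi i) < rate i) ->
  (forall i, f (xi i) = yj (sg i)) ->
  (forall i w, C i w -> gj (sg i) w = gj (sg i) (xi i) /\ f w = yj (sg i)) ->
  forall w, Ls dX C w -> g w = g x /\ f w = y.
Proof.
  intros hsg dxi fxi CF w Kw. split.
  2:{ apply (Ls_in_fiber dX dY f y C); [apply pf | | auto].
      apply (subfiber_rate sg); auto. intros j v Cv; apply (CF j v Cv). }
  apply (md_eq_small dM). intros e he.
  destruct (cg w (e/5)) as [d1 [hd1 Hd1]]; [lra|].
  destruct (cg x (e/5)) as [d2 [hd2 Hd2]]; [lra|].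
  destruct (rate_small (Rmin d2 (e/5))) as [i0 hi0]; [apply Rmin_glb_lt; lra|].
  pose proof (Rmin_l d2 (e/5)). pose proof (Rmin_r d2 (e/5)).
  destruct (Kw d1 hd1 i0) as [i [hi [c [Cc hc]]]].
  destruct (CF i c Cc) as [gc fc].
  pose proof (rate_antitone _ _ hi). pose proof (rate_antitone _ _ (hsg i)).
  assert (e1 : mdist dM (g w) (g c) < e/5) by auto.
  assert (e2 : mdist dM (gj (sg i) c) (g c) < rate (sg i)) by auto.
  assert (e3 : mdist dM (gj (sg i) (xi i)) (g (xi i)) < rate (sg i)) by auto.
  assert (e4 : mdist dM (g x) (g (xi i)) < e/5) by (apply Hd2; pose proof (dxi i); lra).
  rewrite gc, md_sym in e2. rewrite md_sym in e4.
  pose proof (md_tri3 dM (g w) (g c) (gj (sg i) (xi i)) (g x)).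
  pose proof (md_tri dM (gj (sg i) (xi i)) (g (xi i)) (g x)). lra.
Qed.

(** For [x] in [Li Lj], the bad components of the [Lj] near [x] accumulate at a point [z] of
    the component [C(x, g|f^{-1}(y))] lying outside [B(Li Lj, 1/m)]. *)
Lemma limit_bad_component x : Li dX Lj x ->
  exists z, Cfib dX f g y x z /\ ~ Bset dX (Li dX Lj) (1 / INR m) z.
Proof.
  intros Lx. destruct (Li_seq dX Lj x Lx) as [sg [xi [hsg [Lxi dxi]]]].
  set (C := fun i => Cfib dX f (gj (sg i)) (yj (sg i)) (xi i)).
  assert (Hz : forall i, exists z, C i z /\ ~ Bset dX (Lj (sg i)) (1 / INR m) z)
    by (intros i; apply (Lj_bad (sg i)); auto).
  apply choice_fun in Hz. destruct Hz as [zi Hzi].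
  assert (fxi : forall i, f (xi i) = yj (sg i)) by (intros i; apply (Lj_bad (sg i)); auto).
  assert (CF : forall i w, C i w -> gj (sg i) w = gj (sg i) (xi i) /\ f w = yj (sg i))
    by (intros i w [A [_ [sA [_ Aw]]]]; apply sA; auto).
  assert (nC : sets_approach dX (fun w => f w = y) C).
  { apply (fibers_approach dX dY f y C pf). apply (subfiber_rate sg); auto. intros i w Cw; apply CF; auto. }
  assert (LiC : Li dX C x).
  { intros e he. destruct (rate_small e he) as [N hN]. exists N. intros j hj.
    exists (xi j). split; [apply component_refl; auto|].
    pose proof (dxi j). pose proof (rate_antitone _ _ hj). lra. }
  destruct (cluster_sub dX _ C fiber_compact nC (fun i => i) zi) as [z [Hzc Kz]];
    [auto | intros i; apply Hzi |].
  exists z. split.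
  - exists (Ls dX C). split; [|split; [|split]]; auto.
    + apply (Ls_connected dX _ C fiber_compact nC x); auto.
      intros i; apply component_connected.
    + intros w Kw. apply (Ls_level_set x sg xi C); auto.
    + apply Li_Ls; auto.
  - apply (cluster_not_Bset_Li dX Lj sg zi); auto. intros i; apply Hzi.
Qed.

Lemma bad_continua_absurd : inK dX dM f m n y g -> False.
Proof.
  intros [_ Kg].
  destruct (Kg (Li dX Lj) Li_continuum Li_in_fiber Li_diam) as [x [Lx Hx]].
  destruct (limit_bad_component x Lx) as [z [Cz nB]].
  exact (nB (Hx z Cz)).
Qed.

End Limit_of_bad_continua.

Theorem lemma2p3 :
  forall (X Y M : Type) (dX : Metric X) (dY : Metric Y) (dM : Metric M)
    (f : X -> Y),
    perfect dX dY f -> complete dM ->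
    forall (m n : nat), (1 <= m)%nat -> (1 <= n)%nat ->
    forall (y : Y) (g : X -> M), inK dX dM f m n y g ->
    exists V : Y -> Prop, nbhd dY V y /\
    exists delta, 0 < delta /\
      forall y' (g1 : X -> M), V y' -> continuous dX dM g1 ->
        (forall x, f x = y' -> mdist dM (g1 x) (g x) < delta) ->
        inK dX dM f m n y' g1.
Proof.
  intros X Y M dX dY dM f pf _ m n _ _ y g hK.
  apply NNPP. intros Hfail.
  (* neither [V = B(y, rate k)] nor [delta = rate k] works: collect bad data for every [k] *)
  assert (Hk : forall k, exists y' g1 L, mdist dY y y' < rate k /\
             (forall x, f x = y' -> mdist dM (g1 x) (g x) < rate k) /\
             bad_continuum dX dM f m n y' g1 L).
  { intros k. apply NNPP. intros Hn. apply Hfail. exists (ball dY y (rate k)). split.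
    - exists (ball dY y (rate k)). split; [apply ball_open | split; auto].
      unfold ball. rewrite md_refl. apply rate_pos.
    - exists (rate k). split; [apply rate_pos|]. intros y' g1 Vy' cg1 close.
      apply NNPP. intros nK. apply Hn.
      destruct (not_inK_bad_continuum dX dM f m n y' g1 cg1 nK) as [L HL].
      exists y', g1, L. split; [exact Vy' | auto]. }
  apply choice_fun in Hk as [ys Hk]. apply choice_fun in Hk as [gs Hk].
  apply choice_fun in Hk as [LL Hk].
  assert (approach : sets_approach dX (fun x => f x = y) LL).
  { apply (fibers_approach dX dY f y LL pf). intros j w Lw.
    destruct (Hk j) as [hy [_ [_ [Lf _]]]]. rewrite (Lf w Lw). exact hy. }
  destruct (kuratowski_selection dX _ LL (proj2 (proj2 pf) y) approach) as [phi [hphi conv]].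
  apply (bad_continua_absurd dX dY dM f m n y g pf (proj1 hK)
           (fun j => ys (phi j)) (fun j => gs (phi j)) (fun j => LL (phi j))); auto.
  - intros j. pose proof (rate_antitone _ _ (hphi j)). pose proof (proj1 (Hk (phi j))). lra.
  - intros j x fx. pose proof (rate_antitone _ _ (hphi j)).
    pose proof (proj1 (proj2 (Hk (phi j))) x fx). lra.
  - intros j. apply (Hk (phi j)).
Qed.
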